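(* For every $\Delta \ge 1$ there is a local algorithm, using only a port numbering (no unique identifiers), that on every weakly $2$-coloured graph $\mathcal{G}=(V,E)$ without isolated nodes and of maximum degree at most $\Delta$ outputs a dominating set $D$ with $|D| \le |V|/2$ and hence $|D| \le \tfrac{\Delta+1}{2}|D^*|$, where $D^*$ is a minimum dominating set of $\mathcal{G}$.
   Context: Model: a graph $\mathcal{G}=(V,E)$ without isolated nodes is a distributed system; every node runs the same deterministic algorithm. Communication is synchronous: in each round every node receives messages from its neighbours, performs local computation, and sends messages to its neighbours. Each node knows its degree, its own input label (e.g. its colour), and the global degree bound $\Delta$. A local algorithm is one that terminates after $T$ rounds, where $T$ may depend on $\Delta$ but not on the number of nodes; its output at a node is whether the node belongs to the solution. A port numbering means each node has a fixed ordering of its incident edges, known to it; nodes have no identifiers. A weak $2$-colouring assigns each node black or white so that every non-isolated node has at least one neighbour of the opposite colour; it is given as input. *)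

From mathcomp Require Import all_boot.
Set Implicit Arguments. Unset Strict Implicit. Unset Printing Implicit Defensive.

Definition simple_graph (V : finType) (e : rel V) : Prop :=
  (forall v, ~~ e v v) /\ (forall u v, e u v = e v u).

Definition nbrs (V : finType) (e : rel V) (v : V) : {set V} := [set u | e v u].
Definition deg (V : finType) (e : rel V) (v : V) : nat := #|nbrs e v|.

Definition no_isolated (V : finType) (e : rel V) : Prop := forall v, exists u, e v u.
Definition max_deg_le (V : finType) (e : rel V) (Delta : nat) : Prop :=
  forall v, deg e v <= Delta.

Definition weak_2col (V : finType) (e : rel V) (col : V -> bool) : Prop :=
  forall v, exists u, e v u && (col u != col v).

(* Port numbering: port i (i < deg v) of v leads to neighbour p v i; this is a
   bijection between {0,..,deg v - 1} and the neighbours of v. *)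
Definition port_numbering (V : finType) (e : rel V) (p : V -> nat -> V) : Prop :=
  (forall v i, i < deg e v -> e v (p v i)) /\
  (forall v i j, i < deg e v -> j < deg e v -> p v i = p v j -> i = j).

Definition back_port (V : finType) (e : rel V) (p : V -> nat -> V) (u v : V) : nat :=
  find (fun j => p u j == v) (iota 0 (deg e u)).

(* A deterministic synchronous algorithm in the port-numbering model (no
   identifiers).  Initial state depends only on degree and input colour
   (Delta is fixed by the outer quantifier, so the algorithm may depend on it).
   In each round a node sends [send s i] through port i and updates its state
   from the messages received on its ports (None for non-existing ports).
   It stops after [rounds] rounds (a constant, independent of the graph) and
   outputs [out s]. *)
Unset Implicit Arguments.
Record PNAlgo := {
  St : Type;
  Msg : Type;
  init : nat -> bool -> St;
  send : St -> nat -> Msg;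
  recv : St -> (nat -> option Msg) -> St;
  out : St -> bool;
  rounds : nat
}.
Set Implicit Arguments.

Fixpoint run (A : PNAlgo) (V : finType) (e : rel V) (p : V -> nat -> V)
    (col : V -> bool) (t : nat) : V -> St A :=
  match t with
  | 0 => fun v => init A (deg e v) (col v)
  | t'.+1 =>
      let s := run A e p col t' in
      fun v => recv A (s v) (fun i =>
        if i < deg e v then Some (send A (s (p v i)) (back_port e p (p v i) v))
        else None)
  end.

Definition output_set (A : PNAlgo) (V : finType) (e : rel V) (p : V -> nat -> V)
    (col : V -> bool) : {set V} :=
  [set v | out A (run A e p col (rounds A) v)].

Definition dominating (V : finType) (e : rel V) (D : {set V}) : Prop :=
  forall v, v \in D \/ exists2 u, u \in D & e v u.

Definition min_dominating (V : finType) (e : rel V) (D : {set V}) : Prop :=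
  dominating e D /\ forall S : {set V}, dominating e S -> #|D| <= #|S|.

From mathcomp Require Import all_boot.
Set Implicit Arguments.
Unset Strict Implicit.
Unset Printing Implicit Defensive.

(* Every node [u] points, through its lowest suitable port, to a neighbour
   [f u] of the opposite colour; such a neighbour exists because the colouring
   is weak.  Call a node black if its colour is [true].  The sources are the
   black nodes nobody points to and the white nodes not pointed to by a black
   source.  The output [D] consists of
   the non-source white nodes and the black nodes pointed to by a white
   source.  Then [D] dominates, every node of [D] is the target of a source,
   and no source lies in [D]; hence [|D| <= |V \ D|], i.e. [2|D| <= |V|].
   Computing [D] takes four rounds (colours, pointers, black sources, white
   sources).  Finally a dominating set covers [V] by at most [|D*|] closed
   neighbourhoods of size at most [Delta + 1], so [|V| <= (Delta + 1) |D*|]. *)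

Section PointerDomination.

Variables (V : finType) (e : rel V) (col : V -> bool) (f : V -> V).
Hypothesis e_sym : symmetric e.
Hypothesis f_adj : forall u, e u (f u).
Hypothesis f_col : forall u, col (f u) = ~~ col u.

Definition pointed v := [exists u, f u == v].

Definition claimed v := [exists u, [&& col u, ~~ pointed u & f u == v]].

Definition backed v := [exists u, [&& ~~ col u, ~~ claimed u & f u == v]].

Definition pointer_source : {set V} :=
  [set u | if col u then ~~ pointed u else ~~ claimed u].

Definition pointer_domset : {set V} :=
  [set v | if col v then backed v else claimed v].

Lemma pointer_domset_dominating : dominating e pointer_domset.
Proof.
have dom_by_target u : f u \in pointer_domset -> exists2 w, w \in pointer_domset & e u w.
  by exists (f u).
move=> v; rewrite /pointer_domset; case cv: (col v).
- have [/existsP[u /eqP fuv] | unpointed] := boolP (pointed v).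
    have cu : col u = false by rewrite -[col u]negbK -f_col fuv cv.
    have [clu | unclaimed] := boolP (claimed u).
      by right; exists u; rewrite ?inE ?cu // e_sym -fuv.
    by left; rewrite inE cv; apply/existsP; exists u; rewrite cu unclaimed fuv /=.
  right; apply: dom_by_target; rewrite inE f_col cv /=.
  by apply/existsP; exists v; rewrite cv unpointed /=.
- have [clv | unclaimed] := boolP (claimed v); first by left; rewrite inE cv.
  right; apply: dom_by_target; rewrite inE f_col cv /=.
  by apply/existsP; exists v; rewrite cv unclaimed /=.
Qed.

Lemma pointer_domset_sub_image : pointer_domset \subset f @: pointer_source.
Proof.
apply/subsetP => v; rewrite inE; case: (col v).
  by case/existsP=> u /and3P[cu clu /eqP <-]; rewrite imset_f // inE (negbTE cu).
by case/existsP=> u /and3P[cu pu /eqP <-]; rewrite imset_f // inE cu.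
Qed.

Lemma pointer_source_sub_compl : pointer_source \subset ~: pointer_domset.
Proof.
apply/subsetP => u; rewrite !inE; case: (col u) => // unpointed.
by apply: contra unpointed => /existsP[w /and3P[_ _ fw]]; apply/existsP; exists w.
Qed.

Lemma pointer_domset_half : 2 * #|pointer_domset| <= #|V|.
Proof.
rewrite -(cardsC pointer_domset) mul2n -addnn leq_add2l.
rewrite (leq_trans (subset_leq_card pointer_domset_sub_image)) //.
exact: leq_trans (leq_imset_card _ _) (subset_leq_card pointer_source_sub_compl).
Qed.

End PointerDomination.

Lemma card_le_dominating (V : finType) (e : rel V) (Delta : nat) (D : {set V}) :
  symmetric e -> max_deg_le e Delta -> dominating e D -> #|V| <= Delta.+1 * #|D|.
Proof.
move=> e_sym hdeg hdom.
have coverV : [set: V] \subset \bigcup_(d in D) (d |: nbrs e d).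
  apply/subsetP => v _; case: (hdom v) => [vD | [d dD evd]].
    by apply/bigcupP; exists v; rewrite // setU11.
  by apply/bigcupP; exists d; rewrite // !inE e_sym evd orbT.
rewrite -cardsT (leq_trans (subset_leq_card coverV)) // mulnC -sum_nat_const.
elim/big_rec2: _ => [|d n S _ IH]; first by rewrite cards0.
have hd : #|nbrs e d| <= Delta := hdeg d.
rewrite (leq_trans (leq_card_setU _ _).1) // leq_add // cardsU1.
by case: (d \in _); rewrite ?add1n ?ltnS // add0n ltnW.
Qed.

Section Ports.

Variables (V : finType) (e : rel V) (p : V -> nat -> V).
Hypothesis p_num : port_numbering e p.

Lemma port_numbering_onto v u : e v u -> exists2 i, i < deg e v & p v i = u.
Proof.
move=> evu; have [p_adj p_inj] := p_num.
pose s := map (p v) (iota 0 (deg e v)).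
have s_uniq : uniq s.
  by rewrite map_inj_in_uniq ?iota_uniq // => i j; rewrite !mem_iota; apply: p_inj.
have s_sub : {subset s <= enum (nbrs e v)}.
  by move=> x /mapP[i]; rewrite mem_iota => hi ->; rewrite mem_enum inE p_adj.
have s_size : size (enum (nbrs e v)) <= size s by rewrite size_map size_iota -cardE.
have [_ s_eq] := uniq_min_size s_uniq s_sub s_size.
have : u \in s by rewrite s_eq mem_enum inE.
by case/mapP=> i; rewrite mem_iota => hi ->; exists i.
Qed.

Lemma back_portP u v : e u v -> back_port e p u v < deg e u /\ p u (back_port e p u v) = v.
Proof.
move=> /port_numbering_onto[i hi piv].
have hv : has (fun j => p u j == v) (iota 0 (deg e u)).
  by apply/hasP; exists i; rewrite ?mem_iota ?piv.
have lt_back : back_port e p u v < deg e u by move: hv; rewrite has_find size_iota.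
by split=> //; apply/eqP; have := nth_find 0 hv; rewrite nth_iota.
Qed.

End Ports.

Record pstate := PState {
  ps_deg : nat; ps_col : bool; ps_nbr_col : nat -> bool;
  ps_pointed : bool; ps_claimed : bool; ps_backed : bool }.

Record pmsg := PMsg { pm_col : bool; pm_point : bool; pm_claim : bool; pm_back : bool }.

Definition silence := PMsg false false false false.

Definition first_port (s : pstate) :=
  find (fun i => ps_nbr_col s i != ps_col s) (iota 0 (ps_deg s)).

Definition pointer_send (s : pstate) (j : nat) :=
  let points := j == first_port s in
  PMsg (ps_col s) points [&& ps_col s, ~~ ps_pointed s & points]
       [&& ~~ ps_col s, ~~ ps_claimed s & points].

Definition pointer_recv (s : pstate) (m : nat -> option pmsg) :=
  let got i := odflt silence (m i) in
  let heard (flag : pmsg -> bool) := has (fun i => flag (got i)) (iota 0 (ps_deg s)) in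
  PState (ps_deg s) (ps_col s) (fun i => pm_col (got i))
         (heard pm_point) (heard pm_claim) (heard pm_back).

Definition pointer_out (s : pstate) := if ps_col s then ps_backed s else ps_claimed s.

Definition pointer_algo : PNAlgo :=
  Build_PNAlgo pstate pmsg (fun d c => PState d c (fun _ => false) false false false)
    pointer_send pointer_recv pointer_out 4.

Section Simulation.

Variables (V : finType) (e : rel V) (p : V -> nat -> V) (col : V -> bool).
Hypothesis e_simple : simple_graph e.
Hypothesis p_num : port_numbering e p.
Hypothesis col_weak : weak_2col e col.

Definition pointer_port u := find (fun i => col (p u i) != col u) (iota 0 (deg e u)).

Definition pointer u := p u (pointer_port u).

Lemma pointer_portP u : pointer_port u < deg e u /\ col (pointer u) != col u.
Proof.
have [w /andP[euw cw]] := col_weak u; have [i hi piw] := port_numbering_onto p_num euw.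
have hw : has (fun j => col (p u j) != col u) (iota 0 (deg e u)).
  by apply/hasP; exists i; rewrite ?mem_iota ?piw.
have lt_port : pointer_port u < deg e u by move: hw; rewrite has_find size_iota.
by split=> //; have := nth_find 0 hw; rewrite nth_iota.
Qed.

Lemma pointer_adj u : e u (pointer u).
Proof. exact: p_num.1 (pointer_portP u).1. Qed.

Lemma pointer_col u : col (pointer u) = ~~ col u.
Proof. by have [_] := pointer_portP u; case: (col u); case: (col (pointer u)). Qed.

Local Notation state t := (run pointer_algo e p col t).

Lemma run_deg t v : ps_deg (state t v) = deg e v.
Proof. by elim: t v. Qed.

Lemma run_col t v : ps_col (state t v) = col v.
Proof. by elim: t v. Qed.

Lemma first_port_run t v : first_port (state t.+1 v) = pointer_port v.
Proof.
rewrite /first_port /= run_deg run_col; apply: eq_in_find => i.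
by rewrite mem_iota => /= ->; rewrite /= run_col.
Qed.

(* A flag sent by [u] through its pointer port arrives at [v] exactly when
   [pointer u = v], because [back_port] inverts the port numbering on edges. *)
Lemma has_port_pointer v (Q : pred V) :
  has (fun i => Q (p v i) && (back_port e p (p v i) v == pointer_port (p v i)))
      (iota 0 (deg e v))
  = [exists u, Q u && (pointer u == v)].
Proof.
have [_ e_sym] := e_simple; apply/hasP/existsP.
  move=> [i]; rewrite mem_iota => hi /andP[Qu /eqP back].
  have [_ pv] := back_portP p_num (etrans (e_sym _ _) (p_num.1 _ _ hi)).
  by exists (p v i); rewrite Qu /pointer -back pv eqxx.
move=> [u /andP[Qu /eqP uv]].
have evu : e v u by rewrite e_sym -uv pointer_adj.
have [i hi piu] := port_numbering_onto p_num evu.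
exists i; first by rewrite mem_iota.
rewrite piu Qu; have [lt_back pv] := back_portP p_num (etrans (e_sym _ _) evu).
apply/eqP/(p_num.2 u) => //; first exact: (pointer_portP u).1.
by rewrite pv.
Qed.

Definition inbox t v i :=
  if i < deg e v then Some (pointer_send (state t (p v i)) (back_port e p (p v i) v))
  else None.

Lemma run_succ t v : state t.+1 v = pointer_recv (state t v) (inbox t v).
Proof. by []. Qed.

Lemma inbox_heard t v (flag : pmsg -> bool) :
  has (fun i => flag (odflt silence (inbox t v i))) (iota 0 (ps_deg (state t v)))
  = has (fun i => flag (pointer_send (state t (p v i)) (back_port e p (p v i) v)))
        (iota 0 (deg e v)).
Proof. by rewrite run_deg; apply: eq_in_has => i; rewrite mem_iota /inbox => /andP[_ ->]. Qed.

Lemma run_pointed t v : ps_pointed (state t.+2 v) = pointed pointer v.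
Proof.
have -> : pointed pointer v = [exists u, xpredT u && (pointer u == v)] by [].
rewrite run_succ -has_port_pointer; cbn [ps_pointed pointer_recv].
rewrite inbox_heard; apply: eq_has => i; rewrite /pointer_send; cbn [pm_point].
by rewrite first_port_run.
Qed.

Lemma run_claimed t v : ps_claimed (state t.+3 v) = claimed col pointer v.
Proof.
rewrite /claimed; under eq_existsb => u do rewrite andbA.
rewrite run_succ -has_port_pointer; cbn [ps_claimed pointer_recv].
rewrite inbox_heard; apply: eq_has => i; rewrite /pointer_send; cbn [pm_claim].
by rewrite run_col run_pointed first_port_run andbA.
Qed.

Lemma run_backed t v : ps_backed (state t.+4 v) = backed col pointer v.
Proof.
rewrite /backed; under eq_existsb => u do rewrite andbA.
rewrite run_succ -has_port_pointer; cbn [ps_backed pointer_recv].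
rewrite inbox_heard; apply: eq_has => i; rewrite /pointer_send; cbn [pm_back].
by rewrite run_col run_claimed first_port_run andbA.
Qed.

Lemma output_set_pointer_algo :
  output_set pointer_algo e p col = pointer_domset col pointer.
Proof.
apply/setP => v; rewrite !inE.
have -> : out pointer_algo (state (rounds pointer_algo) v) = pointer_out (state 4 v) by [].
by rewrite /pointer_out run_col (run_backed 0) (run_claimed 1).
Qed.

End Simulation.

Theorem theorem6 (Delta : nat) (hDelta : 1 <= Delta) :
  exists A : PNAlgo,
    forall (V : finType) (e : rel V) (p : V -> nat -> V) (col : V -> bool),
      simple_graph e -> no_isolated e -> max_deg_le e Delta ->
      port_numbering e p -> weak_2col e col ->
      let D := output_set A e p col in
      [/\ dominating e D,
          2 * #|D| <= #|V|
        & forall Dstar : {set V}, min_dominating e Dstar ->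
            2 * #|D| <= Delta.+1 * #|Dstar| ].
Proof.
exists pointer_algo => V e p col e_simple _ hdeg p_num col_weak D.
have e_sym : symmetric e := e_simple.2.
have DE : D = pointer_domset col (pointer e p col) by exact: output_set_pointer_algo.
have half : 2 * #|D| <= #|V| by rewrite DE pointer_domset_half.
split=> //.
- rewrite DE; apply: pointer_domset_dominating e_sym _ _.
    exact: pointer_adj p_num col_weak.
  exact: pointer_col p_num col_weak.
- move=> Dstar [Dstar_dom _].
  exact: leq_trans half (card_le_dominating e_sym hdeg Dstar_dom).
Qed.
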